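(* For odd positive integers $k$ and $m$, $$[\pi(e_{n,1}^{(n+k)}),\pi(e_{n,1}^{(n+m)})]=0.$$
   Context: Let $\mathfrak g=Q(n)$ with even basis $e_{i,j}$, odd basis $f_{i,j}$, $\chi(x)=\mathrm{otr}(xE)$ with $E=\sum_{i=1}^{n-1}f_{i,i+1}$ regular nilpotent, $\mathfrak m$ spanned by $e_{i,j},f_{i,j}$ ($i>j$), $\chi(e_{i+1,i})=1$ and $\chi=0$ on the other basis vectors of $\mathfrak m$, $I_\chi$ the left ideal generated by $a-\chi(a)$ ($a\in\mathfrak m$), $\pi:U(\mathfrak g)\to U(\mathfrak g)/I_\chi$, and $W_\chi=\{\pi(y):\mathrm{ad}(a)y\in I_\chi\ \forall a\in\mathfrak m\}$ with product $\pi(y_1)\pi(y_2)=\pi(y_1y_2)$. Sergeev's elements: $e_{i,j}^{(1)}=e_{i,j}$, $f_{i,j}^{(1)}=f_{i,j}$, $e_{i,j}^{(m)}=\sum_k e_{i,k}e_{k,j}^{(m-1)}+(-1)^{m+1}\sum_k f_{i,k}f_{k,j}^{(m-1)}$, $f_{i,j}^{(m)}=\sum_k e_{i,k}f_{k,j}^{(m-1)}+(-1)^{m+1}\sum_k f_{i,k}e_{k,j}^{(m-1)}$; the elements $\pi(e_{n,1}^{(m)})$ lie in $W_\chi$. *)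

From HB Require Import structures.
From mathcomp Require Import all_boot all_order all_algebra all_field.
Set Implicit Arguments. Unset Strict Implicit. Unset Printing Implicit Defensive.
Import Order.TTheory GRing.Theory Num.Theory.
Local Open Scope ring_scope.

(* Q(n) over C with even basis e i j and odd basis f i j, indices 1..n.
   A family of elements (e, f) of a C-algebra A satisfying the defining
   relations x y - (-1)^{|x||y|} y x = [x, y] of U(Q(n)) is the same as an
   algebra morphism U(Q(n)) -> A. *)

Definition idx (n i : nat) : bool := (1 <= i <= n)%N.

Definition delta (A : ringType) (i j : nat) : A := (i == j)%:R.

Definition Qn_relations (A : ringType) (n : nat) (e f : nat -> nat -> A) : Prop :=
  forall i j k l, idx n i -> idx n j -> idx n k -> idx n l ->
    [/\ e i j * e k l - e k l * e i j
          = delta A j k * e i l - delta A l i * e k j,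
        e i j * f k l - f k l * e i j
          = delta A j k * f i l - delta A l i * f k j
      & f i j * f k l + f k l * f i j
          = delta A j k * e i l + delta A l i * e k j].

(* Sergeev's elements: sergeev e f n m = (e^{(m)}, f^{(m)}) for m >= 1
   (sergeev at m = 0 is a junk value equal to (e, f)). *)
Fixpoint sergeev (A : ringType) (n : nat) (e f : nat -> nat -> A) (m : nat)
  : (nat -> nat -> A) * (nat -> nat -> A) :=
  match m with
  | 0 => (e, f)
  | m'.+1 =>
    match m' with
    | 0 => (e, f)
    | _ =>
      let p := sergeev n e f m' in
      (fun i j => \sum_(1 <= k < n.+1) e i k * p.1 k j
                  + (-1) ^+ m.+1 * \sum_(1 <= k < n.+1) f i k * p.2 k j,
       fun i j => \sum_(1 <= k < n.+1) e i k * p.2 k j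
                  + (-1) ^+ m.+1 * \sum_(1 <= k < n.+1) f i k * p.1 k j)
    end
  end.

Definition sergeev_e (A : ringType) n (e f : nat -> nat -> A) m :=
  (sergeev n e f m).1.

Definition is_left_ideal (A : ringType) (L : A -> Prop) : Prop :=
  [/\ L 0, (forall x y, L x -> L y -> L (x + y)) & (forall a x, L x -> L (a * x))].

(* chi on the basis of m:  chi(e_{i+1,i}) = 1, chi = 0 on other e_ij, f_ij (i > j). *)
Definition chi_e (A : ringType) (i j : nat) : A := (i == j.+1)%:R.

From HB Require Import structures.
From mathcomp Require Import all_boot all_order all_algebra all_field.
Set Implicit Arguments.
Unset Strict Implicit.
Unset Printing Implicit Defensive.
Import GRing.Theory.
Local Open Scope ring_scope.

(* Arrange the generators into the supermatrix T = [[e, -f], [f, -e]]: Sergeev's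
   e^(m) is the even block of T^m and f^(m) is, up to sign, its odd-even block.
   On the super tensor square let X = T ⊗ 1, Y = 1 ⊗ T, P the super flip and
   Q the flip twisted by the parity operator.  The defining relations of Q(n)
   amount to [Y, X] = [P + Q, X], while P intertwines X and Y and Q
   anti-intertwines them.  Propagated to powers, this yields for the entries
   x_r = (T^r)_(n,1) and their odd partners y_r the recursion
     [x_(r+2), x_s] - [x_r, x_(s+2)] - [x_(r+1), x_s] - [x_r, x_(s+1)] = B(r, s),
   whose right-hand side cancels against B(s, r) in the symmetrisation when r + s
   is even and in the antisymmetrisation when r + s is odd.  Dividing by 2,
   [x_(r+2), x_s] = [x_r, x_(s+2)] and [x_(r+1), x_s] = - [x_r, x_(s+1)] in the
   respective cases, and x_0 is a scalar, so [x_a, x_b] = 0 whenever a + b is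
   even.  The commutator of the theorem thus vanishes already in U(Q(n)). *)

Inductive zmod_term : Type :=
  | ZAtom of nat | ZZero | ZAdd of zmod_term & zmod_term | ZOpp of zmod_term.

Fixpoint zmod_eval (V : zmodType) (env : seq V) (t : zmod_term) : V :=
  match t with
  | ZAtom i => env`_i
  | ZZero => 0
  | ZAdd a b => zmod_eval env a + zmod_eval env b
  | ZOpp a => - zmod_eval env a
  end.

Fixpoint zmod_coef (t : zmod_term) (i : nat) : int :=
  match t with
  | ZAtom j => (i == j)%:Z
  | ZZero => 0
  | ZAdd a b => zmod_coef a i + zmod_coef b i
  | ZOpp a => - zmod_coef a i
  end.

Lemma zmod_evalE (V : zmodType) (env : seq V) t :
  zmod_eval env t = \sum_(i < size env) env`_i *~ zmod_coef t i.
Proof.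
elim: t => [j||a IHa b IHb|a IHa] /=.
- case: (ltnP j (size env)) => hj.
    rewrite (bigD1 (Ordinal hj)) //= eqxx mulr1z big1 ?addr0 // => i /eqP hi.
    have /negbTE -> : (i : nat) != j by apply/eqP => ij; apply/hi/val_inj.
    by rewrite mulr0z.
  rewrite nth_default // big1 // => i _.
  have /negbTE -> : (i : nat) != j by rewrite neq_ltn (leq_trans (ltn_ord i) hj).
  by rewrite mulr0z.
- by rewrite big1 // => i _; rewrite mulr0z.
- by rewrite IHa IHb -big_split; apply: eq_bigr => i _; rewrite mulrzDr.
- by rewrite IHa -sumrN; apply: eq_bigr => i _; rewrite mulrNz.
Qed.

Lemma zmod_eval_eq (V : zmodType) (env : seq V) t1 t2 :
  all (fun i => zmod_coef t1 i == zmod_coef t2 i) (iota 0 (size env)) ->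
  zmod_eval env t1 = zmod_eval env t2.
Proof.
move=> /allP coefE; rewrite !zmod_evalE; apply: eq_bigr => i _.
by rewrite (eqP (coefE i _)) // mem_iota leq0n add0n ltn_ord.
Qed.

(* Proves an identity of Z-modules, treating every subterm that is not built
   from [0], [+] and [-] (e.g. a ring product) as an opaque atom; atoms are
   identified up to unification. *)
Ltac zmod_unifb x y :=
  constr:(ltac:(first [unify x y; exact true | exact false]) : bool).
Ltac zmod_index x l :=
  lazymatch l with
  | cons ?y ?l' =>
      lazymatch zmod_unifb x y with
      | true => constr:(0%N)
      | false => let k := zmod_index x l' in constr:(S k)
      end
  end.
Ltac zmod_mem x l :=
  lazymatch l with
  | nil => constr:(false)
  | cons ?y ?l' =>
      lazymatch zmod_unifb x y with true => constr:(true) | false => zmod_mem x l' end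
  end.
Ltac zmod_snoc l x :=
  lazymatch l with
  | nil => constr:(cons x nil)
  | cons ?y ?l' => let r := zmod_snoc l' x in constr:(cons y r)
  end.
Ltac zmod_reify t env :=
  lazymatch t with
  | (?a + ?b)%R =>
      lazymatch zmod_reify a env with (?ta, ?env1) =>
      lazymatch zmod_reify b env1 with (?tb, ?env2) => constr:((ZAdd ta tb, env2)) end end
  | (- ?a)%R =>
      lazymatch zmod_reify a env with (?ta, ?env1) => constr:((ZOpp ta, env1)) end
  | 0%R => constr:((ZZero, env))
  | _ =>
      let env1 := lazymatch zmod_mem t env with
                  | true => env
                  | false => zmod_snoc env t
                  end in
      let k := zmod_index t env1 in constr:((ZAtom k, env1))
  end.
Ltac zmod_eq :=
  lazymatch goal with
  | |- @eq ?V ?l ?r =>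
      lazymatch zmod_reify l (@nil V) with (?tl, ?env1) =>
      lazymatch zmod_reify r env1 with (?tr, ?env2) =>
        change (zmod_eval env2 tl = zmod_eval env2 tr);
        apply: zmod_eval_eq; vm_compute; reflexivity
      end end
  end.

Ltac ring_expand :=
  rewrite ?(mulrDr, mulrDl, mulrBr, mulrBl, mulN1r, mulrN1, mulrN, mulNr, mulrA,
            opprD, opprB, (@opprK _), mulr1, mul1r, mulr0, mul0r).

Lemma eq_of_sub_eq (V : zmodType) (x y u v : V) : u = v -> x - y = u - v -> x = y.
Proof. by move=> -> /eqP; rewrite subrr subr_eq0 => /eqP. Qed.

Ltac sign_simpl :=
  rewrite /= ?andbT ?andbF ?expr0 ?expr1 ?mulN1r ?mulrN1 ?mul1r ?mulr1 ?mulrN ?mulNr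
          ?opprK ?mulr0 ?mul0r ?oppr0.

Section ExchangePowers.
Variables (R : pzRingType) (X Y P Q : R).
Local Notation S := (P + Q).
Local Notation D := (P - Q).
Hypotheses (PX : P * X = Y * P) (XP : X * P = P * Y).
Hypotheses (QX : Q * X = - (Y * Q)) (XQ : X * Q = - (Q * Y)).
Hypothesis YX : Y * X - X * Y = S * X - X * S.

Lemma comm_Y_expX r : Y * X ^+ r - X ^+ r * Y = S * X ^+ r - X ^+ r * S.
Proof.
elim: r => [|r IH]; first by rewrite !expr0 !mulr1 !mul1r !subrr.
have E (Z : R) : Z * X ^+ r.+1 - X ^+ r.+1 * Z
    = (Z * X - X * Z) * X ^+ r + X * (Z * X ^+ r - X ^+ r * Z).
  by rewrite exprS mulrBl mulrBr !mulrA addrA subrK.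
by rewrite !E YX IH.
Qed.

Lemma mul_Y_exp r : Y * X ^+ r = S * X ^+ r - X ^+ r * S + X ^+ r * Y.
Proof. by rewrite -comm_Y_expX subrK. Qed.

Lemma mul_Y_S : Y * S = D * X.
Proof. by rewrite mulrDr mulrBl PX QX opprK. Qed.
Lemma mul_S_Y : S * Y = X * D.
Proof. by rewrite mulrDl mulrBr XP XQ opprK. Qed.
Lemma mul_Y_D : Y * D = S * X.
Proof. by rewrite mulrBr mulrDl PX QX. Qed.
Lemma mul_D_Y : D * Y = X * S.
Proof. by rewrite mulrBl mulrDr XP XQ. Qed.

Lemma exchange2 r :
  (X ^+ r.+2 - X ^+ r.+1 * D) * Y = Y * (X ^+ r.+2 - D * X ^+ r.+1).
Proof.
rewrite [LHS]mulrBl [RHS]mulrBr -[_ * D * Y]mulrA mul_D_Y [_ * (X * S)]mulrA -exprSr.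
rewrite [Y * (D * _)]mulrA mul_Y_D -[S * X * _]mulrA -exprS.
by rewrite mul_Y_exp; zmod_eq.
Qed.

Lemma exchange1 r :
  - (X ^+ r * S) * Y
  = (X ^+ r.+2 - X ^+ r.+1 * D) - (X ^+ r.+2 - D * X ^+ r.+1) + Y * - (S * X ^+ r).
Proof.
rewrite mulNr mulrN -[_ * S * Y]mulrA mul_S_Y [_ * (X * D)]mulrA -exprSr.
rewrite [Y * (S * _)]mulrA mul_Y_S -[D * X * _]mulrA -exprS.
zmod_eq.
Qed.

Lemma exchange0 r : - X ^+ r * Y = - (X ^+ r * S) + S * X ^+ r + Y * - X ^+ r.
Proof. by rewrite mulNr mulrN mul_Y_exp; zmod_eq. Qed.

Lemma exchange_powers r s :
  Y ^+ s * (X ^+ r.+2 - X ^+ r.+1 * D) - Y ^+ s.+1 * (X ^+ r * S) - Y ^+ s.+2 * X ^+ r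
  = (X ^+ r.+2 - D * X ^+ r.+1) * Y ^+ s - S * X ^+ r * Y ^+ s.+1 - X ^+ r * Y ^+ s.+2.
Proof.
have e2 := exchange2 r; have e1 := exchange1 r; have e0 := exchange0 r.
set a := X ^+ r.+2 - X ^+ r.+1 * D in e2 e1 *.
set a' := X ^+ r.+2 - D * X ^+ r.+1 in e2 e1 *.
set b := X ^+ r * S in e1 e0 *; set b' := S * X ^+ r in e1 e0 *.
set c := X ^+ r in e0 *.
clearbody a a' b b' c.
apply: subr0_eq.
elim: s => [|s IH].
  transitivity (- (- b * Y - (a - a' + Y * - b')) - (- c * Y - (- b + b' + Y * - c)) * Y
                - Y * (- c * Y - (- b + b' + Y * - c))); last first.
    by rewrite e1 e0 !subrr mul0r mulr0 !subr0 oppr0.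
  rewrite expr0 expr1 expr2; ring_expand; zmod_eq.
transitivity ((Y ^+ s * a - Y ^+ s.+1 * b - Y ^+ s.+2 * c
               - (a' * Y ^+ s - b' * Y ^+ s.+1 - c * Y ^+ s.+2)) * Y
              - Y ^+ s * (a * Y - Y * a')
              - Y ^+ s.+1 * (- b * Y - (a - a' + Y * - b'))
              - Y ^+ s.+2 * (- c * Y - (- b + b' + Y * - c))); last first.
  by rewrite IH e2 e1 e0 !subrr mul0r !mulr0 !subr0.
rewrite !(exprSr Y); ring_expand; zmod_eq.
Qed.

End ExchangePowers.

Section CommutatorParity.
Variables (A : pzRingType) (x y : nat -> A).
Definition commx p q := x p * x q - x q * x p.
Definition commx_rhs r s := y r.+1 * y s - y r * y s.+1
                            + (-1) ^+ (r + s) * (y s * y r.+1 - y s.+1 * y r).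
Local Notation c := commx.
Local Notation B := commx_rhs.
Hypothesis no2torsion : forall u : A, u + u = 0 -> u = 0.
Hypothesis x0_comm : forall q, x 0 * x q = x q * x 0.
Hypothesis commx_rec : forall r s, c r.+2 s - c r s.+2 - c r.+1 s - c r s.+1 = B r s.

Lemma commx_shift2 r s : ~~ odd (r + s) -> c r.+2 s = c r s.+2.
Proof.
move=> ev; apply: subr0_eq; apply: no2torsion.
have sum := f_equal2 +%R (commx_rec r s) (commx_rec s r).
rewrite /commx_rhs (addnC s r) -signr_odd (negbTE ev) expr0 !mul1r in sum.
transitivity ((c r.+2 s - c r s.+2 - c r.+1 s - c r s.+1)
              + (c s.+2 r - c s r.+2 - c s.+1 r - c s r.+1)
              - (y r.+1 * y s - y r * y s.+1 + (y s * y r.+1 - y s.+1 * y r)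
                 + (y s.+1 * y r - y s * y r.+1 + (y r * y s.+1 - y r.+1 * y s)))).
  rewrite /commx; zmod_eq.
by rewrite sum subrr.
Qed.

Lemma commx_shift1 r s : odd (r + s) -> c r.+1 s = - c r s.+1.
Proof.
move=> od; apply/eqP; rewrite -addr_eq0; apply/eqP; apply: no2torsion.
have diff := f_equal2 (fun u v => u - v) (commx_rec r s) (commx_rec s r).
rewrite /= /commx_rhs (addnC s r) -signr_odd od expr1 !mulN1r in diff.
transitivity (- ((c r.+2 s - c r s.+2 - c r.+1 s - c r s.+1)
                 - (c s.+2 r - c s r.+2 - c s.+1 r - c s r.+1))
              + ((y r.+1 * y s - y r * y s.+1 - (y s * y r.+1 - y s.+1 * y r))
                 - (y s.+1 * y r - y s * y r.+1 - (y r * y s.+1 - y r.+1 * y s)))).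
  rewrite /commx; zmod_eq.
by rewrite diff addNr.
Qed.

Lemma commx_even_eq0 a b : ~~ odd (a + b) -> c a b = 0.
Proof.
elim/ltn_ind: a b => -[|[|r]] IH b ev.
- by rewrite /commx x0_comm subrr.
- have od : odd (0 + b) by move: ev; rewrite add1n /= negbK.
  by rewrite commx_shift1 // (IH 0) ?oppr0 // addnS /= negbK.
- have ev' : ~~ odd (r + b) by move: ev; rewrite !addSn /= negbK.
  by rewrite commx_shift2 // IH // !addnS /= !negbK.
Qed.

End CommutatorParity.

Definition kdelta (A : pzRingType) (T : eqType) (x y : T) : A := (x == y)%:R.
Arguments kdelta {A T} x y.

Section KroneckerDelta.
Variable A : pzRingType.
Implicit Types (T : finType) (u : A).

Lemma kdeltaC (T : eqType) (x y : T) u : kdelta x y * u = u * kdelta x y.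
Proof. by rewrite /kdelta (commr_nat u). Qed.

Lemma kdelta_sym (T : eqType) (x y : T) : kdelta x y = kdelta y x :> A.
Proof. by rewrite /kdelta eq_sym. Qed.

Lemma sum_kdelta T (c : T) (F : T -> A) : \sum_z kdelta z c * F z = F c.
Proof.
rewrite (bigD1 c) //= /kdelta eqxx mul1r big1 ?addr0 // => z /negbTE ->.
by rewrite mul0r.
Qed.

Lemma sum_kdelta_r T (c : T) (F : T -> A) : \sum_z F z * kdelta z c = F c.
Proof. by under eq_bigr => z _ do rewrite -kdeltaC; exact: sum_kdelta. Qed.

Lemma sum_kdelta_mid T (d : T) (F G : T -> A) :
  \sum_z F z * (kdelta z d * G z) = F d * G d.
Proof. by under eq_bigr => z _ do rewrite mulrA -kdeltaC -mulrA; rewrite sum_kdelta. Qed.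

Lemma sum_kdelta2 T (c d : T) (F G : T -> A) :
  \sum_z (kdelta c z * F z) * (kdelta z d * G z) = kdelta c d * (F c * G c).
Proof.
under eq_bigr => z _ do rewrite kdelta_sym -mulrA.
by rewrite sum_kdelta mulrA -kdeltaC mulrA.
Qed.

End KroneckerDelta.

Lemma sum_pair (A : pzRingType) (T1 T2 : finType) (F : T1 * T2 -> A) :
  \sum_z F z = \sum_z1 \sum_z2 F (z1, z2).
Proof. by rewrite pair_bigA; apply: eq_bigr => -[]. Qed.

Section IndexedMatrix.
Variables (A : pzRingType) (T : finType).
Local Notation N := #|{: T}|.

Definition mxent (X : 'M[A]_N) (x y : T) : A := X (enum_rank x) (enum_rank y).
Definition mxfun (F : T -> T -> A) : 'M[A]_N :=
  \matrix_(i, j) F (enum_val i) (enum_val j).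

Lemma mxent_fun F x y : mxent (mxfun F) x y = F x y.
Proof. by rewrite /mxent /mxfun mxE !enum_rankK. Qed.

Lemma mxent_ext X Y : (forall x y, mxent X x y = mxent Y x y) -> X = Y.
Proof.
move=> XY; apply/matrixP => i j.
by have := XY (enum_val i) (enum_val j); rewrite /mxent !enum_valK.
Qed.

Lemma mxent_mul X Y x y : mxent (X * Y) x y = \sum_z mxent X x z * mxent Y z y.
Proof.
rewrite /mxent -mulmxE mxE (reindex (@enum_rank T)) //=.
by exists enum_val => z _; rewrite ?enum_rankK ?enum_valK.
Qed.

Lemma mxentD X Y x y : mxent (X + Y) x y = mxent X x y + mxent Y x y.
Proof. by rewrite /mxent mxE. Qed.

Lemma mxentN X x y : mxent (- X) x y = - mxent X x y.
Proof. by rewrite /mxent mxE. Qed.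

Lemma mxentB X Y x y : mxent (X - Y) x y = mxent X x y - mxent Y x y.
Proof. by rewrite mxentD mxentN. Qed.

Lemma mxent1 x y : mxent 1 x y = kdelta x y.
Proof. by rewrite /mxent mxE (inj_eq (@enum_rank_inj _)). Qed.

Definition monomial_mx (pi : T -> T) (s : T -> A) : 'M[A]_N :=
  mxfun (fun u v => kdelta v (pi u) * s u).

Lemma mxent_monomial_mul pi s X x y :
  mxent (monomial_mx pi s * X) x y = s x * mxent X (pi x) y.
Proof.
rewrite mxent_mul; under eq_bigr => z _ do rewrite mxent_fun -mulrA.
by rewrite sum_kdelta.
Qed.

Lemma mxent_mul_monomial pi s : involutive pi -> forall X x y,
  mxent (X * monomial_mx pi s) x y = mxent X x (pi y) * s (pi y).
Proof.
move=> piK X x y; rewrite mxent_mul.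
under eq_bigr => z _ do rewrite mxent_fun mulrA -kdeltaC -mulrA.
have kdelta_pi z : kdelta y (pi z) = kdelta z (pi y) :> A.
  by rewrite /kdelta eq_sym (inv_eq piK).
under eq_bigr => z _ do rewrite kdelta_pi.
by rewrite sum_kdelta.
Qed.

End IndexedMatrix.
Arguments mxent {A T} X x y.
Arguments mxfun {A T} F.
Arguments monomial_mx {A T} pi s.

Lemma expr_conj (R : pzRingType) (P X : R) s :
  P * P = 1 -> (P * X * P) ^+ s = P * X ^+ s * P.
Proof.
move=> PP; elim: s => [|s IH]; first by rewrite !expr0 mulr1 PP.
by rewrite exprSr IH [X ^+ s.+1]exprSr !mulrA -(mulrA _ P P) PP mulr1.
Qed.

Section SuperMatrix.
Variables (n : nat) (A : pzRingType) (e f : nat -> nat -> A).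

Definition sidx := ('I_n * bool)%type.

Definition gen (p : bool) (i j : 'I_n) : A := if p then f i.+1 j.+1 else e i.+1 j.+1.
Arguments gen : simpl never.

(* The supermatrix [[e, -f], [f, -e]] of generators, indexed by [sidx]. *)
Definition smx (a b : sidx) : A := (-1) ^+ b.2 * gen (a.2 (+) b.2) a.1 b.1.

Fixpoint smx_pow (r : nat) (a b : sidx) : A :=
  if r is r'.+1 then \sum_z smx a z * smx_pow r' z b else kdelta a b.

Lemma smx_pow1 a b : smx_pow 1 a b = smx a b.
Proof. by rewrite /= sum_kdelta_r. Qed.

Lemma smx_powSr r a b : smx_pow r.+1 a b = \sum_z smx_pow r a z * smx z b.
Proof.
elim: r a b => [|r IH] a b.
  by rewrite smx_pow1 /=; under eq_bigr => z _ do rewrite kdelta_sym; rewrite sum_kdelta.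
have -> : smx_pow r.+2 a b = \sum_z smx a z * smx_pow r.+1 z b by [].
under eq_bigr => z _ do rewrite IH big_distrr.
rewrite exchange_big /=; apply: eq_bigr => w _.
by rewrite big_distrl /=; apply: eq_bigr => z _; rewrite mulrA.
Qed.

Definition pflip (a : sidx) : sidx := (a.1, ~~ a.2).

Lemma pflipK : involutive pflip.
Proof. by case=> i p; rewrite /pflip /= negbK. Qed.

Lemma smx_pow_pflip r a b :
  smx_pow r (pflip a) (pflip b) = (-1) ^+ odd r * smx_pow r a b.
Proof.
elim: r a b => [|r IH] a b.
  by rewrite /= /kdelta (inj_eq (can_inj pflipK)) mul1r.
rewrite /= (reindex pflip) /=; last by exists pflip => ? _; rewrite pflipK.
rewrite big_distrr /=; apply: eq_bigr => w _.
rewrite IH; case: a w => [ai ap] [wi wp]; rewrite /smx /pflip /=.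
by case: ap; case: wp; case: (odd r); sign_simpl; rewrite ?negbK.
Qed.

Definition sidx2 := (sidx * sidx)%type.
Local Notation N := #|{: sidx2}|.

(* On the super tensor square, [lmx r] is T^r ⊗ 1 with its Koszul sign, [swap_mx]
   the super flip P and [tswap_mx] the flip Q composed with the parity change on
   both factors; [rmx s] is then 1 ⊗ T^s. *)
Definition lmx r : 'M[A]_N :=
  mxfun (fun x y => kdelta x.2 y.2 * ((-1) ^+ ((x.1.2 (+) y.1.2) && x.2.2) * smx_pow r x.1 y.1)).

Definition swap2 (x : sidx2) : sidx2 := (x.2, x.1).
Definition swap_sign (x : sidx2) : A := (-1) ^+ (x.1.2 && x.2.2).
Definition tswap2 (x : sidx2) : sidx2 := (pflip x.2, pflip x.1).
Definition tswap_sign (x : sidx2) : A := (-1) ^+ (x.2.2 (+) (x.1.2 && x.2.2)).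

Definition swap_mx : 'M[A]_N := monomial_mx swap2 swap_sign.
Definition tswap_mx : 'M[A]_N := monomial_mx tswap2 tswap_sign.
Definition rmx s := swap_mx * lmx s * swap_mx.

Lemma swap2K : involutive swap2. Proof. by case. Qed.
Lemma tswap2K : involutive tswap2. Proof. by case=> a b; rewrite /tswap2 /= !pflipK. Qed.

Lemma mxent_swap_mul X x y : mxent (swap_mx * X) x y = swap_sign x * mxent X (swap2 x) y.
Proof. exact: mxent_monomial_mul. Qed.
Lemma mxent_tswap_mul X x y : mxent (tswap_mx * X) x y = tswap_sign x * mxent X (tswap2 x) y.
Proof. exact: mxent_monomial_mul. Qed.
Lemma mxent_mul_swap X x y :
  mxent (X * swap_mx) x y = mxent X x (swap2 y) * swap_sign (swap2 y).
Proof. exact: mxent_mul_monomial swap2K _ _ _. Qed.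
Lemma mxent_mul_tswap X x y :
  mxent (X * tswap_mx) x y = mxent X x (tswap2 y) * tswap_sign (tswap2 y).
Proof. exact: mxent_mul_monomial tswap2K _ _ _. Qed.

Lemma swap_mxK : swap_mx * swap_mx = 1.
Proof.
apply: mxent_ext => x y.
rewrite mxent_swap_mul mxent_fun swap2K mxent1 kdeltaC mulrA kdelta_sym.
by rewrite /swap_sign /swap2 /= andbC -signr_addb addbb mul1r.
Qed.

Lemma mxent_rmx s x y : mxent (rmx s) x y = kdelta x.1 y.1 * smx_pow s x.2 y.2.
Proof.
rewrite mxent_mul_swap mxent_swap_mul mxent_fun /swap2 /swap_sign /=.
case: x y => [[ai ap] [ci cp]] [[bi bp] [di dp]] /=.
rewrite /kdelta xpair_eqE.
have [_|_] := eqVneq ai bi; last by rewrite !mul0r !mulr0 mul0r.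
have [->|_] := eqVneq ap bp; last by rewrite andbF !mul0r !mulr0 mul0r.
by case: bp; case: dp; case: cp; sign_simpl.
Qed.

Lemma mxent_rmx_lmx s t x y : mxent (rmx s * lmx t) x y =
  smx_pow s x.2 y.2 * ((-1) ^+ ((x.1.2 (+) y.1.2) && y.2.2) * smx_pow t x.1 y.1).
Proof.
rewrite mxent_mul sum_pair.
under eq_bigr => z1 _ do (under eq_bigr => z2 _ do rewrite mxent_rmx mxent_fun /= -mulrA).
under eq_bigr => z1 _ do rewrite -big_distrr /= sum_kdelta_mid.
under eq_bigr => z1 _ do rewrite kdelta_sym.
by rewrite sum_kdelta.
Qed.

Lemma mxent_lmx_rmx s t x y : mxent (lmx t * rmx s) x y =
  (-1) ^+ ((x.1.2 (+) y.1.2) && x.2.2) * smx_pow t x.1 y.1 * smx_pow s x.2 y.2.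
Proof.
rewrite mxent_mul sum_pair exchange_big /=.
under eq_bigr => z2 _ do (under eq_bigr => z1 _ do rewrite mxent_rmx mxent_fun /= -mulrA).
under eq_bigr => z2 _ do rewrite -big_distrr /= sum_kdelta_mid.
rewrite (eq_bigr (fun z2 => kdelta z2 x.2 * ((-1) ^+ ((x.1.2 (+) y.1.2) && x.2.2)
           * smx_pow t x.1 y.1 * smx_pow s z2 y.2))) ?sum_kdelta // => z2 _.
rewrite kdelta_sym; have [->|neq] := eqVneq z2 x.2; first by [].
by rewrite /kdelta (negbTE neq) !mul0r.
Qed.

Lemma lmx0 : lmx 0 = 1.
Proof.
apply: mxent_ext => -[[ai ap] [ci cp]] [[bi bp] [di dp]].
rewrite mxent_fun mxent1 /= /kdelta !xpair_eqE.
have [_|_] := eqVneq ai bi; rewrite /= ?mulr0 //.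
by case: ap; case: bp; case: (ci == di); case: (cp == dp); sign_simpl.
Qed.

Lemma lmxSr r : lmx r.+1 = lmx r * lmx 1.
Proof.
apply: mxent_ext => -[a c] [b d].
rewrite mxent_mul sum_pair mxent_fun smx_powSr /=; symmetry.
under eq_bigr => z1 _ do (under eq_bigr => z2 _ do rewrite !mxent_fun smx_pow1 /=).
under eq_bigr => z1 _ do rewrite sum_kdelta2.
rewrite [in RHS]big_distrr [in RHS]big_distrr /=.
apply: eq_bigr => z1 _; congr (_ * _).
by rewrite mulr_signM -andb_addl addbA -(addbA a.2) addbb addbF.
Qed.

Lemma lmx_exp r : lmx 1 ^+ r = lmx r.
Proof.
elim: r => [|r IH]; first by rewrite expr0 lmx0.
by rewrite exprSr IH (lmxSr r).
Qed.

Lemma rmx_exp s : rmx 1 ^+ s = rmx s.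
Proof. by rewrite expr_conj ?swap_mxK // lmx_exp. Qed.

Lemma tswap_lmx1 : tswap_mx * lmx 1 = - (rmx 1 * tswap_mx).
Proof.
apply: mxent_ext => -[[ai ap] [ci cp]] [[bi bp] [di dp]].
rewrite mxentN mxent_tswap_mul mxent_mul_tswap mxent_rmx mxent_fun !smx_pow1.
rewrite /tswap_sign /tswap2 /pflip /smx /kdelta /= !xpair_eqE.
by case: ap; case: bp; case: cp; case: dp; sign_simpl.
Qed.

Lemma lmx1_tswap : lmx 1 * tswap_mx = - (tswap_mx * rmx 1).
Proof.
apply: mxent_ext => -[[ai ap] [ci cp]] [[bi bp] [di dp]].
rewrite mxentN mxent_tswap_mul mxent_mul_tswap mxent_rmx mxent_fun !smx_pow1.
rewrite /tswap_sign /tswap2 /pflip /smx /kdelta /= !xpair_eqE.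
by case: ap; case: bp; case: cp; case: dp; sign_simpl.
Qed.

Hypothesis gen_rel : forall p q i j k l, gen p i j * gen q k l =
  (-1) ^+ (p && q) * (gen q k l * gen p i j) + kdelta k j * gen (p (+) q) i l
  - (-1) ^+ (p && q) * (kdelta i l * gen (p (+) q) k j).

(* The degree-one relations of Q(n), in tensor form. *)
Lemma rmx1_lmx1_comm : rmx 1 * lmx 1 - lmx 1 * rmx 1
  = (swap_mx + tswap_mx) * lmx 1 - lmx 1 * (swap_mx + tswap_mx).
Proof.
apply: mxent_ext => -[[ai ap] [ci cp]] [[bi bp] [di dp]].
rewrite !mxentB mxent_rmx_lmx mxent_lmx_rmx mulrDl mulrDr !mxentD.
rewrite mxent_swap_mul mxent_tswap_mul mxent_mul_swap mxent_mul_tswap !mxent_fun !smx_pow1.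
rewrite /swap_sign /tswap_sign /swap2 /tswap2 /pflip /smx /kdelta /= !xpair_eqE.
case: ap; case: bp; case: cp; case: dp; sign_simpl;
  rewrite ?mulrA (gen_rel _ _ ai bi ci di) /kdelta; sign_simpl; ring_expand; zmod_eq.
Qed.

Lemma rmx_lmx_exchange r s :
  rmx s * (lmx r.+2 - lmx r.+1 * (swap_mx - tswap_mx))
    - rmx s.+1 * (lmx r * (swap_mx + tswap_mx)) - rmx s.+2 * lmx r
  = (lmx r.+2 - (swap_mx - tswap_mx) * lmx r.+1) * rmx s
    - (swap_mx + tswap_mx) * lmx r * rmx s.+1 - lmx r * rmx s.+2.
Proof.
have swap_lmx1 : swap_mx * lmx 1 = rmx 1 * swap_mx.
  by rewrite /rmx -!mulrA swap_mxK mulr1.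
have lmx1_swap : lmx 1 * swap_mx = swap_mx * rmx 1.
  by rewrite /rmx !mulrA swap_mxK mul1r.
have := exchange_powers swap_lmx1 lmx1_swap tswap_lmx1 lmx1_tswap rmx1_lmx1_comm r s.
by rewrite !lmx_exp !rmx_exp.
Qed.

Arguments smx_pow : simpl never.

Section Entries.
Variables (i j : 'I_n).
Local Notation x := (fun r => smx_pow r (i, false) (j, false)).
Local Notation y := (fun r => smx_pow r (i, true) (j, false)).

Lemma smx_pow_commx_rec r s :
  commx x r.+2 s - commx x r s.+2 - commx x r.+1 s - commx x r s.+1 = commx_rhs y r s.
Proof.
have := congr1 (fun Z => mxent Z ((i, false), (i, false)) ((j, false), (j, false)))
  (rmx_lmx_exchange r s).
rewrite /= [rmx s * _]mulrBr [rmx s * (_ * _)]mulrA [_ * (swap_mx - tswap_mx)]mulrBr.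
rewrite [rmx s.+1 * _]mulrA [_ * (swap_mx + tswap_mx)]mulrDr.
rewrite [(lmx r.+2 - _) * _]mulrBl -[(swap_mx - tswap_mx) * _ * _]mulrA.
rewrite [(swap_mx - tswap_mx) * _]mulrBl -[(swap_mx + tswap_mx) * _ * _]mulrA.
rewrite [(swap_mx + tswap_mx) * _]mulrDl.
rewrite !mxentB !mxentD !mxent_mul_swap !mxent_mul_tswap !mxent_swap_mul !mxent_tswap_mul.
rewrite !mxent_rmx_lmx !mxent_lmx_rmx /swap2 /tswap2 /swap_sign /tswap_sign /pflip /=.
have odd_entry q : smx_pow q (i, false) (j, true) = (-1) ^+ odd q * y q.
  by rewrite -smx_pow_pflip.
rewrite !odd_entry /= /commx /commx_rhs -[(-1) ^+ (r + s)]signr_odd oddD.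
case: (odd r); case: (odd s); sign_simpl; ring_expand => /eqP; rewrite -subr_eq0 => /eqP h;
  apply: subr0_eq; first [rewrite -h; zmod_eq | rewrite -oppr0 -h; zmod_eq].
Qed.

End Entries.

End SuperMatrix.

Section SergeevElements.
Variables (n : nat) (A : nzRingType) (e f : nat -> nat -> A).

Lemma gen_rel_of_Qn : Qn_relations n e f -> forall p q (i j k l : 'I_n),
  gen e f p i j * gen e f q k l =
    (-1) ^+ (p && q) * (gen e f q k l * gen e f p i j) + kdelta k j * gen e f (p (+) q) i l
    - (-1) ^+ (p && q) * (kdelta i l * gen e f (p (+) q) k j).
Proof.
move=> rel p q i j k l.
have idx_succ (u : 'I_n) : idx n u.+1 by rewrite /idx ltn_ord.
have delta_succ (u v : 'I_n) : delta A u.+1 v.+1 = kdelta v u.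
  by rewrite /delta /kdelta eqSS eq_sym.
have [ee ef ff] := rel _ _ _ _ (idx_succ i) (idx_succ j) (idx_succ k) (idx_succ l).
have [_ fe _] := rel _ _ _ _ (idx_succ k) (idx_succ l) (idx_succ i) (idx_succ j).
rewrite !delta_succ in ee ef ff fe.
rewrite /gen; case: p; case: q; sign_simpl.
- by apply: (eq_of_sub_eq ff); ring_expand; zmod_eq.
- by apply: (eq_of_sub_eq (esym fe)); ring_expand; zmod_eq.
- by apply: (eq_of_sub_eq ef); ring_expand; zmod_eq.
- by apply: (eq_of_sub_eq ee); ring_expand; zmod_eq.
Qed.

Lemma smx_powS_gen r p (i : 'I_n) b : smx_pow e f r.+1 (i, p) b =
  \sum_(k < n) (gen e f p i k * smx_pow e f r (k, false) b
                - gen e f (~~ p) i k * smx_pow e f r (k, true) b).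
Proof.
have -> : smx_pow e f r.+1 (i, p) b = \sum_z smx e f (i, p) z * smx_pow e f r z b by [].
rewrite sum_pair; apply: eq_bigr => k _; rewrite big_bool /smx /=.
by case: p; sign_simpl; rewrite addrC.
Qed.

Lemma sum_shift1 (F : nat -> A) : \sum_(1 <= k < n.+1) F k = \sum_(k < n) F k.+1.
Proof. by rewrite big_add1 big_mkord. Qed.

Lemma sergeev_eSS m i j : (sergeev n e f m.+2).1 i j =
  \sum_(1 <= k < n.+1) e i k * (sergeev n e f m.+1).1 k j
  + (-1) ^+ m.+3 * \sum_(1 <= k < n.+1) f i k * (sergeev n e f m.+1).2 k j.
Proof. by []. Qed.

Lemma sergeev_fSS m i j : (sergeev n e f m.+2).2 i j =
  \sum_(1 <= k < n.+1) e i k * (sergeev n e f m.+1).2 k j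
  + (-1) ^+ m.+3 * \sum_(1 <= k < n.+1) f i k * (sergeev n e f m.+1).1 k j.
Proof. by []. Qed.

Lemma sergeev_smx_pow m (i j : 'I_n) :
  (sergeev n e f m.+1).1 i.+1 j.+1 = smx_pow e f m.+1 (i, false) (j, false)
  /\ (sergeev n e f m.+1).2 i.+1 j.+1 = (-1) ^+ m * smx_pow e f m.+1 (i, true) (j, false).
Proof.
elim: m i j => [|m IH] i j; first by rewrite !smx_pow1 /smx /gen; sign_simpl.
have sign_mid (u v : A) : u * ((-1) ^+ m * v) = (-1) ^+ m * (u * v).
  by rewrite mulrA (commr_sign u m) -mulrA.
have signSSS : (-1) ^+ m.+3 * (-1) ^+ m = -1 :> A.
  by rewrite -exprD -signr_odd !addSn /= addnn odd_double.
rewrite sergeev_eSS sergeev_fSS !sum_shift1 !smx_powS_gen /gen /=; split.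
- under [X in X + _ = _]eq_bigr => k _ do rewrite (proj1 (IH k j)).
  under [X in _ + _ * X = _]eq_bigr => k _ do rewrite (proj2 (IH k j)) sign_mid.
  by rewrite -big_distrr mulrA signSSS mulN1r sumrB.
- under [X in X + _ = _]eq_bigr => k _ do rewrite (proj2 (IH k j)) sign_mid.
  under [X in _ + _ * X = _]eq_bigr => k _ do rewrite (proj1 (IH k j)).
  rewrite -big_distrr sumrB !exprS; sign_simpl; ring_expand; zmod_eq.
Qed.

End SergeevElements.

Lemma add_self_eq0 (F : numFieldType) (V : lmodType F) (u : V) : u + u = 0 -> u = 0.
Proof.
have two_neq0 : (2%:R : F) != 0 by rewrite Num.Theory.pnatr_eq0.
by move=> uu; rewrite -[u]scale1r -(mulVf two_neq0) -scalerA scaler_nat (mulr2n u) uu scaler0.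
Qed.

Theorem proposition5p11 (n : nat) (hn : (0 < n)%N) (k m : nat)
    (hk : odd k) (hm : odd m)
    (A : algType algC) (e f : nat -> nat -> A) (hrel : Qn_relations n e f)
    (L : A -> Prop) (hL : is_left_ideal L)
    (hchi : forall i j, (1 <= j)%N -> (j < i)%N -> (i <= n)%N ->
              L (e i j - chi_e A i j) /\ L (f i j)) :
  L (sergeev_e n e f (n + k) n 1 * sergeev_e n e f (n + m) n 1
     - sergeev_e n e f (n + m) n 1 * sergeev_e n e f (n + k) n 1).
Proof.
have last_lt_n : (n.-1 < n)%N by rewrite ltn_predL.
pose i : 'I_n := Ordinal last_lt_n; pose j : 'I_n := Ordinal hn.
pose x r := smx_pow e f r (i, false) (j, false).
have sergeev_x q : (0 < q)%N -> sergeev_e n e f q n 1 = x q.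
  have i_succ : i.+1 = n by rewrite /= prednK.
  move=> q_gt0; have := proj1 (sergeev_smx_pow e f q.-1 i j).
  by rewrite i_succ prednK // /sergeev_e => ->.
have x0_comm q : x 0 * x q = x q * x 0 by exact: kdeltaC.
have even : ~~ odd ((n + k) + (n + m)) by rewrite !oddD hk hm; case: (odd n).
have := commx_even_eq0 (@add_self_eq0 _ A) x0_comm
  (smx_pow_commx_rec (gen_rel_of_Qn hrel) i j) even.
rewrite /commx !sergeev_x ?addn_gt0 ?hn // => ->.
by case: hL.
Qed.
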